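(* Let $N$ be an acyclic CP-net over features $X_1,\dots,X_n$ with finite domains, and let $\mathrm{pen}$ be the penalty function of the weighted soft-constraint approximation of $N$ defined in the context. Then for all outcomes $\alpha,\beta$, if $\alpha \succ_N \beta$ then $\mathrm{pen}(\alpha) < \mathrm{pen}(\beta)$.
   Context: A CP-net $N$ consists of a directed graph on the features, where $Pa(X)$ denotes the set of parents of $X$, together with, for every feature $X$ and every assignment $u$ to $Pa(X)$, a strict total order $\succ_{X,u}$ on $D(X)$. $N$ is acyclic if its graph is acyclic. An outcome is a complete assignment to all features. The relation $\succ_N$ is the transitive closure of improving flips: $\alpha$ is obtained from $\beta$ by an improving flip if $\alpha$ and $\beta$ differ only on one feature $X$ and $\alpha(X) \succ_{X,u} \beta(X)$, where $u$ is the common restriction of $\alpha,\beta$ to $Pa(X)$. Weighted approximation: for a feature $X$, a parent assignment $u$ and $x\in D(X)$, let $p_u(x)\in\{0,\dots,|D(X)|-1\}$ be the number of values of $D(X)$ strictly above $x$ in $\succ_{X,u}$. Weights are defined by processing the features in a reverse topological order of the graph of $N$: $w(X)=1$ if $X$ has no children, and otherwise $w(X)=\sum_{Y:\,X\in Pa(Y)} w(Y)\cdot|D(Y)|$. For an outcome $\alpha$, $\mathrm{pen}(\alpha)=\sum_{X} w(X)\cdot p_{\alpha|_{Pa(X)}}(\alpha(X))$, where $\alpha|_{Pa(X)}$ is the restriction of $\alpha$ to $Pa(X)$. (This is the weighted/min+ soft constraint problem, with one soft constraint on $\{X\}\cup Pa(X)$ for each feature $X$; smaller total penalty means more preferred.)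 *)

From Stdlib Require Import Relations.
From mathcomp Require Import all_boot.
Set Implicit Arguments. Unset Strict Implicit. Unset Printing Implicit Defensive.

(* The CP-net graph is [par : rel 'I_n] with [par j i] meaning "j is a parent of i"
   (edge j -> i).  The CPT of feature i is [pref i : outcome -> rel (D i)]:
   [pref i a x y] means "x is preferred to y" (x \succ_{i,u} y) under the
   parent assignment u = a|_{Pa(i)}; it must only depend on a through Pa(i). *)

Definition outcome (n : nat) (D : 'I_n -> finType) := forall i : 'I_n, D i.

Definition acyclic (n : nat) (par : rel 'I_n) : Prop :=
  forall (x : 'I_n) (p : seq 'I_n), p != [::] -> path par x p -> last x p != x.

Definition strict_total_order (T : finType) (r : rel T) : Prop :=
  (forall x, ~~ r x x) /\ (forall x y z, r x y -> r y z -> r x z) /\ (forall x y, x != y -> r x y || r y x).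

Definition is_CPnet (n : nat) (D : 'I_n -> finType) (par : rel 'I_n)
    (pref : forall i : 'I_n, outcome D -> rel (D i)) : Prop :=
  (forall i (a b : outcome D), (forall j, par j i -> a j = b j) ->
      forall x y, pref i a x y = pref i b x y) /\
  (forall i (a : outcome D), strict_total_order (pref i a)).

Definition improving_flip (n : nat) (D : 'I_n -> finType)
    (pref : forall i : 'I_n, outcome D -> rel (D i)) (alpha beta : outcome D) : Prop :=
  exists i : 'I_n, (forall j, j != i -> alpha j = beta j) /\ pref i beta (alpha i) (beta i).

Definition cp_succ (n : nat) (D : 'I_n -> finType)
    (pref : forall i : 'I_n, outcome D -> rel (D i)) : relation (outcome D) :=
  clos_trans (outcome D) (improving_flip pref).

Definition rankp (n : nat) (D : 'I_n -> finType)
    (pref : forall i : 'I_n, outcome D -> rel (D i)) (i : 'I_n) (a : outcome D) : nat :=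
  #|[pred y : D i | pref i a y (a i)]|.

Definition weight_step (n : nat) (D : 'I_n -> finType) (par : rel 'I_n)
    (w : 'I_n -> nat) (x : 'I_n) : nat :=
  if [exists y, par x y] then \sum_(y | par x y) w y * #|D y| else 1.

(* For an acyclic graph on n nodes, every path has fewer than n edges, so
   n iterations reach the (unique) solution of the recursion, i.e. the
   weights computed in reverse topological order. *)
Definition weight (n : nat) (D : 'I_n -> finType) (par : rel 'I_n) : 'I_n -> nat :=
  iter n (weight_step D par) (fun _ => 1).

Definition pen (n : nat) (D : 'I_n -> finType) (par : rel 'I_n)
    (pref : forall i : 'I_n, outcome D -> rel (D i)) (a : outcome D) : nat :=
  \sum_(i < n) weight D par i * rankp pref i a.

From Stdlib Require Import Relations.
From mathcomp Require Import all_boot.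

(* 1. Acyclicity bounds every [par]-path by n - 1 edges, so the n-fold
      iteration [weight] of the weight recursion is already a fixpoint of
      [weight_step]: w(X) = sum over children Y of w(Y) * |D(Y)| (or 1).
   2. A rank p_u(x) is always smaller than |D(X)|.  With the fixpoint
      equation this gives the key inequality: for every outcome, the
      weighted ranks of the children of X sum to strictly less than w(X).
   3. In an improving flip of X, the rank of X drops by at least one, which
      saves at least w(X); only X and its children change rank, and the
      children together can gain at most their current contribution, which
      is < w(X) by step 2.  So the flip strictly decreases the penalty, and
      the theorem follows by induction on the transitive closure. *)

Set Implicit Arguments. Unset Strict Implicit.

Lemma acyclic_path_uniq n (par : rel 'I_n) : acyclic par ->
  forall p x, path par x p -> uniq (x :: p).
Proof.
move=> Hac; elim=> [|y p IH] x //= /andP [Hxy Hp].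
have /= -> := IH y Hp; rewrite andbT; apply/negP => Hx.
have Hpath : path par x (y :: p) by rewrite /= Hxy.
have Hx' : x \in y :: p by [].
case/splitPr: Hx' Hpath => p1 p2; rewrite cat_path => /andP [H1 H2].
have Hcycle : path par x (rcons p1 x).
  by rewrite rcons_path H1 /=; case: (last x p1) H2 => ? ? /= /andP [->].
have Hne : rcons p1 x != [::] by case: (p1).
by have := Hac x (rcons p1 x) Hne Hcycle; rewrite last_rcons eqxx.
Qed.

Lemma acyclic_path_size n (par : rel 'I_n) : acyclic par ->
  forall p x, path par x p -> size p < n.
Proof.
move=> Hac p x /(acyclic_path_uniq Hac) /card_uniqP /= Hs.
by have := max_card (mem (x :: p)); rewrite card_ord Hs.
Qed.

Lemma acyclic_irrefl n (par : rel 'I_n) : acyclic par -> forall x, ~~ par x x.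
Proof.
move=> Hac x; apply/negP => Hxx.
by have := Hac x [:: x] isT; rewrite /= Hxx eqxx => /(_ isT).
Qed.

Section Weights.
Variables (n : nat) (D : 'I_n -> finType) (par : rel 'I_n).

Local Notation iterw k := (iter k (weight_step D par) (fun _ => 1)).

Lemma weight_step_congr (w1 w2 : 'I_n -> nat) x :
  (forall y, par x y -> w1 y = w2 y) -> weight_step D par w1 x = weight_step D par w2 x.
Proof.
move=> Hw; rewrite /weight_step; case: ifP => // _.
by apply: eq_bigr => y Hy; rewrite Hw.
Qed.

Lemma iter_weight_stable m x :
  (forall p, path par x p -> size p < m) -> forall k, m <= k -> iterw k x = iterw m x.
Proof.
elim: m x => [|m IH] x Hpaths; first by have := Hpaths [::] isT.
case=> // k Hk; rewrite !iterS; apply: weight_step_congr => y Hy.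
apply: IH => // p Hp.
by have := Hpaths (y :: p); rewrite /= Hy Hp => /(_ isT).
Qed.

Lemma weight_fixpoint : acyclic par ->
  forall x, weight D par x = weight_step D par (weight D par) x.
Proof.
move=> Hac x; rewrite /weight -iterS; symmetry.
by apply: iter_weight_stable => // p; apply: acyclic_path_size.
Qed.

Lemma weight_gt0 : (forall y, 0 < #|D y|) -> forall x, 0 < weight D par x.
Proof.
move=> HD x; rewrite /weight.
suff iterw_gt0 k y : 0 < iterw k y by [].
elim: k y => [|k IH] y //=; rewrite /weight_step; case: existsP => // [[z Hz]].
rewrite (bigD1 z Hz) /=; apply: leq_trans (leq_addr _ _).
by rewrite muln_gt0 IH HD.
Qed.

End Weights.

Section CPnet.
Variables (n : nat) (D : 'I_n -> finType) (par : rel 'I_n)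
    (pref : forall i : 'I_n, outcome D -> rel (D i)).
Hypothesis Hac : acyclic par.
Hypothesis Hcp : is_CPnet par pref.

Local Notation w := (weight D par).
Local Notation rank := (rankp pref).

(* p_u(x) < |D(X)|: the value x itself is not strictly above x. *)
Lemma rankp_lt_card i a : rank i a < #|D i|.
Proof.
rewrite /rankp -(cardC [pred y | @pref i a y (a i)]) -addn1 leq_add2l.
apply/card_gt0P; exists (a i); rewrite !inE /=.
by case: Hcp => _ /(_ i a) [->].
Qed.

Lemma children_pen_lt_weight X (a : outcome D) :
  \sum_(i | par X i) w i * rank i a < w X.
Proof.
have HD y : 0 < #|D y| by apply/card_gt0P; exists (a y).
rewrite [w X](weight_fixpoint D Hac) /weight_step.
case: existsP => [[y Hy]|Hnochild]; last first.
  by rewrite big1 // => i Hi; case: Hnochild; exists i.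
rewrite (bigD1 y Hy) [S in _ < S](bigD1 y Hy) /= -addSn.
apply: leq_add; first by rewrite ltn_pmul2l ?weight_gt0 ?rankp_lt_card.
by apply: leq_sum => i _; rewrite leq_mul2l ltnW ?rankp_lt_card ?orbT.
Qed.

Section ImprovingFlip.
Variables (alpha beta : outcome D) (X : 'I_n).
Hypothesis Hsame : forall j, j != X -> alpha j = beta j.
Hypothesis Hbetter : @pref X beta (alpha X) (beta X).

Lemma pref_flip_invariant i : ~~ par X i -> @pref i alpha =2 @pref i beta.
Proof.
move=> HnX x y; case: Hcp => Hlocal _; apply: Hlocal => j Hj; apply: Hsame.
by apply: contraNneq HnX => <-.
Qed.

(* The flipped feature strictly improves its rank: every value above
   alpha(X) is above beta(X) by transitivity, and alpha(X) itself is too. *)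
Lemma rankp_flipped_lt : rank X alpha < rank X beta.
Proof.
have [_ Htot] := Hcp.
apply: proper_card; apply/properP; split.
  apply/subsetP => y; rewrite !inE /= pref_flip_invariant ?acyclic_irrefl //.
  by have [_ [Htrans _]] := Htot X beta; move/Htrans; apply.
by exists (alpha X); rewrite !inE //=; have [-> _] := Htot X alpha.
Qed.

Lemma rankp_unaffected i : i != X -> ~~ par X i -> rank i alpha = rank i beta.
Proof.
move=> HiX HnX; rewrite /rankp (Hsame HiX).
by apply: eq_card => y; rewrite !inE /= pref_flip_invariant.
Qed.

Lemma pen_outside_flip_le :
  \sum_(i | i != X) w i * rank i alpha <=
  \sum_(i | i != X) w i * rank i beta + \sum_(i | par X i) w i * rank i alpha.
Proof.
apply: (@leq_trans (\sum_(i | i != X)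
    (w i * rank i beta + (if par X i then w i * rank i alpha else 0)))).
  apply: leq_sum => i HiX; case: ifP => Hchild; first exact: leq_addl.
  by rewrite addn0 rankp_unaffected ?Hchild.
rewrite big_split /= leq_add2l [S in _ <= S]big_mkcond /= [S in _ <= S](bigD1 X) //=.
exact: leq_addl.
Qed.

Lemma improving_flip_pen_lt : pen par pref alpha < pen par pref beta.
Proof.
rewrite /pen (bigD1 X) //= [S in _ < S](bigD1 X) //=.
apply: (@leq_trans (w X * (rank X alpha).+1 + \sum_(i | i != X) w i * rank i beta)).
  rewrite mulnS -addnA addnCA -addnS leq_add2l; apply: leq_ltn_trans pen_outside_flip_le _.
  by rewrite addnC ltn_add2r children_pen_lt_weight.
by rewrite leq_add2r leq_mul2l rankp_flipped_lt orbT.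
Qed.

End ImprovingFlip.
End CPnet.

Theorem theorem3 (n : nat) (D : 'I_n -> finType) (par : rel 'I_n)
    (pref : forall i : 'I_n, outcome D -> rel (D i)) :
  @acyclic n par -> @is_CPnet n D par pref ->
  forall alpha beta : outcome D,
    @cp_succ n D pref alpha beta -> @pen n D par pref alpha < @pen n D par pref beta.
Proof.
move=> Hac Hcp alpha beta; elim=> [a b [X [Hsame Hbetter]] | a b c _ Hab _ Hbc].
  exact: improving_flip_pen_lt Hsame Hbetter.
exact: ltn_trans Hab Hbc.
Qed.
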